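(* For every positive integer $n$, $$S_n=2\sum_{k=1}^n\binom{n-1}{k-1}\binom{2k}{k}\binom{2n-2k}{n-k}.$$
   Context: $(S_n)_{n\ge0}$ is the integer sequence defined by $S_0=1$, $S_1=4$ and $(n+1)^2S_{n+1}=4(3n^2+3n+1)S_n-32n^2S_{n-1}$ for $n\ge1$; it is known that $S_n=\sum_{k=0}^n\binom nk\binom{2k}k\binom{2n-2k}{n-k}$ for all $n\ge0$. *)

From mathcomp Require Import all_boot all_order all_algebra.
Set Implicit Arguments.
Unset Strict Implicit.
Unset Printing Implicit Defensive.
Import GRing.Theory Num.Theory.
Local Open Scope ring_scope.

Definition S_rec (S : nat -> int) : Prop :=
  [/\ S 0%N = 1, S 1%N = 4 &
      forall n : nat, (1 <= n)%N ->
        (n.+1%:Z) ^+ 2 * S n.+1 =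
        4 * (3 * n%:Z ^+ 2 + 3 * n%:Z + 1) * S n - 32 * n%:Z ^+ 2 * S n.-1].

From mathcomp Require Import all_boot all_order all_algebra.
From mathcomp Require Import ring zify.
Import GRing.Theory Num.Theory.
Local Open Scope ring_scope.

(* The summand F(n, k) = C(n,k) C(2k,k) C(2n-2k,n-k) is hypergeometric in both
   n and k, and creative telescoping (Zeilberger) produces a rational G(n, k) with
     (n+1)^2 F(n+1,k) - 4(3n^2+3n+1) F(n,k) + 32 n^2 F(n-1,k) = G(n,k+1) - G(n,k),
   so summing over k shows that sum_k F(n, k) satisfies the recurrence of S_n and
   hence equals S_n.  Splitting C(n,k) = C(n-1,k) + C(n-1,k-1) by Pascal's rule
   gives two sums that the reflection k -> n - k, which preserves
   C(2k,k) C(2n-2k,n-k), maps onto each other. *)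

Definition central_pair (n k : nat) : nat := 'C(2 * k, k) * 'C(2 * n - 2 * k, n - k).

Definition S_term (n k : nat) : nat := 'C(n, k) * central_pair n k.

Definition S_sum (n : nat) : nat := \sum_(k < n.+1) S_term n k.

Lemma central_pair_sym n k : (k <= n)%N -> central_pair n (n - k) = central_pair n k.
Proof.
move=> le_kn; rewrite /central_pair subKn // mulnC.
by congr (_ * _); congr 'C(_, _); lia.
Qed.

Lemma sum_bin_rev n (f : nat -> nat) :
  (\sum_(k < n.+1) 'C(n, k) * f k = \sum_(k < n.+1) 'C(n, k) * f (n - k))%N.
Proof.
rewrite (reindex_inj rev_ord_inj) /=; apply: eq_bigr => k _.
by rewrite subSS bin_sub // -ltnS.
Qed.

Lemma sum_binS n (f : nat -> nat) :
  (\sum_(k < n.+2) 'C(n.+1, k) * f k = \sum_(k < n.+1) 'C(n, k) * (f k + f k.+1))%N.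
Proof.
have shift : (\sum_(k < n.+1) 'C(n, k) * f k
              = f 0 + \sum_(k < n.+1) 'C(n, k.+1) * f k.+1)%N.
  rewrite big_ord_recl [in RHS]big_ord_recr /= (bin_small (ltnSn n)).
  by rewrite mul0n addn0 bin0 mul1n.
rewrite big_ord_recl bin0 mul1n.
under eq_bigr do rewrite /= binS mulnDl.
rewrite big_split addnA -shift -big_split /=.
by apply: eq_bigr => k _; rewrite mulnDr.
Qed.

Lemma S_sumS n : S_sum n.+1 = (2 * \sum_(k < n.+1) 'C(n, k) * central_pair n.+1 k.+1)%N.
Proof.
rewrite /S_sum /S_term sum_binS.
under eq_bigr do rewrite mulnDr.
rewrite big_split /= mul2n -addnn; congr (_ + _).
rewrite sum_bin_rev; apply: eq_bigr => k _.
by rewrite -subSS central_pair_sym.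
Qed.

Local Notation F n k := ((S_term n k)%:R : rat).

(* Closed form of [F (k + m) k]: indexing by m = n - k keeps truncated
   subtraction out of the factorials. *)
Definition fact_term (k m : nat) : rat :=
  ((k + m)`! * (2 * k)`! * (2 * m)`!)%N%:R / (k`! ^ 3 * m`! ^ 3)%N%:R.

Lemma natr_fact_neq0 n : (n`!%:R : rat) != 0.
Proof. by rewrite pnatr_eq0 -lt0n fact_gt0. Qed.

Lemma S_term_fact k m : F (k + m) k = fact_term k m.
Proof.
have den_neq0 : ((k`! ^ 3 * m`! ^ 3)%N%:R : rat) != 0.
  by rewrite natrM !natrX mulf_neq0 // expf_neq0 // natr_fact_neq0.
apply: (mulIf den_neq0); rewrite divfK // -natrM; congr _%:R.
rewrite /S_term /central_pair -mulnBr !addKn.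
have := bin_fact (leq_addr m k); rewrite addKn => <-.
have := bin_fact (leq_addr k k); rewrite addnK addnn -mul2n => <-.
have := bin_fact (leq_addr m m); rewrite addnK addnn -mul2n => <-.
ring.
Qed.

Lemma fact_termC k m : fact_term k m = fact_term m k.
Proof. by rewrite /fact_term addnC mulnAC [(_ * m`! ^ 3)%N]mulnC. Qed.

Lemma fact_termSr k m :
  fact_term k m.+1 * m.+1%:R ^+ 2 = fact_term k m * (2 * (k + m).+1%:R * (2 * m).+1%:R).
Proof.
rewrite /fact_term addnS mulnSr addn2 !factS !natrM ?natrX.
by field; rewrite !natr_fact_neq0 nat1r pnatr_eq0.
Qed.

Lemma S_term_eq0 n k : (n < k)%N -> S_term n k = 0%N.
Proof. by move=> lt_nk; rewrite /S_term bin_small. Qed.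

Lemma S_term_mul_diff n k : (n <= k)%N -> F n k * (n%:R - k%:R) = 0.
Proof.
rewrite leq_eqVlt => /orP[/eqP <-|/S_term_eq0 ->]; first by rewrite subrr mulr0.
by rewrite mul0r.
Qed.

Lemma S_termSn n k :
  F n k * (2 * n.+1%:R * (2 * n%:R + 1 - 2 * k%:R)) = F n.+1 k * (n.+1%:R - k%:R) ^+ 2.
Proof.
have [le_kn | lt_nk] := leqP k n.
  have [m ->] : exists m, n = (k + m)%N by exists (n - k)%N; lia.
  rewrite -addnS !S_term_fact.
  transitivity (fact_term k m.+1 * m.+1%:R ^+ 2); last ring.
  by rewrite fact_termSr; ring.
rewrite S_term_eq0 // mul0r expr2 mulrA S_term_mul_diff ?mul0r //.
Qed.

Lemma S_termnS n k :
  F n.+1 k.+1 * (k.+1%:R ^+ 2 * (2 * n%:R + 1 - 2 * k%:R))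
  = F n.+1 k * (n.+1%:R - k%:R) ^+ 2 * (2 * k%:R + 1).
Proof.
have [le_kn | lt_nk] := leqP k n.
  have [m ->] : exists m, n = (k + m)%N by exists (n - k)%N; lia.
  rewrite -addnS S_term_fact -addSnnS S_term_fact.
  transitivity (fact_term k.+1 m * k.+1%:R ^+ 2 * (2 * m%:R + 1)); first ring.
  rewrite fact_termC fact_termSr fact_termC addnC.
  transitivity (fact_term k m.+1 * m.+1%:R ^+ 2 * (2 * k%:R + 1)); last ring.
  by rewrite fact_termSr; ring.
by rewrite S_term_eq0 // mul0r expr2 mulrA S_term_mul_diff ?mul0r.
Qed.

Lemma odd_natr_neq0 a b : (2 * a%:R + 1 - 2 * b%:R : rat) != 0.
Proof.
rewrite -[2]/(2%:R) -!natrM natr1 subr_eq0 eqr_nat.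
by apply/negP => /eqP; lia.
Qed.

(* Zeilberger's certificate G(n, k) for the recurrence of S_n. *)
Definition certificate (n k : nat) : rat :=
  F n.+1 k * (k%:R ^+ 2 * (2 * n%:R * k%:R - (2 * n%:R - 1) * (n%:R + 1)))
  / ((n%:R + 1) * (2 * n%:R + 1 - 2 * k%:R)).

Lemma S_term_telescope n k : (0 < n)%N ->
  n.+1%:R ^+ 2 * F n.+1 k - 4 * (3 * n%:R ^+ 2 + 3 * n%:R + 1) * F n k
  + 32 * n%:R ^+ 2 * F n.-1 k = certificate n k.+1 - certificate n k.
Proof.
case: n => // p _ /=.
have [c1 c2 c3] : [/\ k.+1%:R ^+ 2 * (2 * p.+1%:R + 1 - 2 * k%:R) != 0 :> rat,
                      2 * p.+2%:R * (2 * p.+1%:R + 1 - 2 * k%:R) != 0 :> rat &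
                      2 * p.+1%:R * (2 * p%:R + 1 - 2 * k%:R) != 0 :> rat].
  by split; rewrite !mulf_neq0 ?expf_neq0 ?odd_natr_neq0 ?pnatr_eq0.
rewrite /certificate.
move: (S_termSn p k) => /(canRL (mulfK c3)) ->.
move: (S_termSn p.+1 k) => /(canRL (mulfK c2)) ->.
move: (S_termnS p.+1 k) => /(canRL (mulfK c1)) ->.
by field; rewrite !nat1r natr1 !odd_natr_neq0 !pnatr_eq0.
Qed.

Lemma natr_S_sum_widen n m : (n < m)%N -> ((S_sum n)%:R : rat) = \sum_(k < m) F n k.
Proof.
move=> lt_nm; rewrite natr_sum (big_ord_widen _ (fun k => F n k) lt_nm) big_mkcond /=.
apply: eq_bigr => k _; case: ltnP => // le_nk.
by rewrite S_term_eq0.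
Qed.

Lemma natr_S_sum_rec n : (0 < n)%N ->
  n.+1%:R ^+ 2 * (S_sum n.+1)%:R
  = 4 * (3 * n%:R ^+ 2 + 3 * n%:R + 1) * (S_sum n)%:R
    - 32 * n%:R ^+ 2 * (S_sum n.-1)%:R :> rat.
Proof.
move=> n_gt0; apply/eqP; rewrite -subr_eq0 opprB addrA.
rewrite !(@natr_S_sum_widen _ n.+3) //; [|by lia..].
rewrite !mulr_sumr addrAC -sumrB -big_split /=.
rewrite (eq_bigr (fun k : 'I_n.+3 => certificate n k.+1 - certificate n k)); last first.
  by move=> k _; rewrite S_term_telescope.
rewrite -(big_mkord xpredT (fun k => certificate n k.+1 - certificate n k)) telescope_sumr //.
by rewrite /certificate S_term_eq0 // expr2 !(mul0r, mulr0) subrr.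
Qed.

Lemma S_rec_S_sum : S_rec (fun n => (S_sum n)%:Z).
Proof.
split=> [||n n_gt0]; [by rewrite /S_sum !big_ord_recr big_ord0..|].
apply: (@intr_inj rat).
transitivity (n.+1%:R ^+ 2 * (S_sum n.+1)%:R : rat); first ring.
rewrite natr_S_sum_rec //; ring.
Qed.

Lemma S_rec_uniq {S1 S2 : nat -> int} : S_rec S1 -> S_rec S2 -> S1 =1 S2.
Proof.
case=> S10 S11 rec1 [S20 S21 rec2].
suff eq2 n : S1 n = S2 n /\ S1 n.+1 = S2 n.+1 by move=> n; case: (eq2 n).
elim: n => [|n [eq_n eq_Sn]]; first by rewrite S10 S20 S11 S21.
split=> //; apply: (@mulfI _ (n.+2%:Z ^+ 2)); first by rewrite expf_neq0.
by rewrite rec1 // rec2 // eq_n eq_Sn.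
Qed.

Theorem lemma2p7 (S : nat -> int) (hS : S_rec S) (n : nat) (hn : (0 < n)%N) :
  S n = 2 * (\sum_(1 <= k < n.+1)
               ('C(n.-1, k.-1) * 'C(2 * k, k) * 'C(2 * n - 2 * k, n - k))%N%:Z).
Proof.
case: n hn => // n _.
rewrite (S_rec_uniq hS S_rec_S_sum) S_sumS PoszM; congr (_ * _).
rewrite (big_morph Posz PoszD (erefl 0%:Z)) big_add1 big_mkord /=.
by apply: eq_bigr => k _; rewrite -mulnA.
Qed.
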